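(* Let $U$ be a finite set of attributes, $\varphi$ a standard closure operator on $U$, and $X\subseteq U$. Let $\mathrm{LCD}(Y,\Sigma)$ denote the output of the algorithm LinClosureDirect described below on input set $Y\subseteq U$ and implication set $\Sigma$. (i) If $\Sigma$ is the canonical direct unit basis of $\varphi$, then $\mathrm{LCD}(X,\Sigma)=\varphi(X)$. (ii) If $\Sigma$ is the D-basis of $\varphi$, then $\mathrm{LCD}(\varphi_0(X),\Sigma)=\varphi(X)$.
   Context: An implication over $U$ is a pair $A\to B$ with $A,B\subseteq U$; closure $\Sigma(X)$ w.r.t. a set of implications $\Sigma$ is the smallest superset of $X$ that contains $B$ whenever it contains $A$, for each $A\to B\in\Sigma$. A closure operator $\varphi$ on $U$ is standard if for every $a\in U$ the set $\varphi(a)\setminus\{a\}$ is closed, and $\varphi(a)\neq\varphi(b)$ for $a\neq b$. For $c\in U$, $A\subseteq U$ is a minimal generator of $c$ if $c\in\varphi(A)$, $c\notin A$, and no proper subset $A'\subsetneq A$ has $c\in\varphi(A')$. Canonical direct unit basis: $\{A\to c \mid c\in U,\ A \text{ a minimal generator of } c\}$. D-basis: let $\Sigma_0=\{a\to c\mid a,c\in U,\ c\in\varphi(a)\setminus\{a\}\}$ and $\varphi_0(X)$ the closure of $X$ w.r.t. $\Sigma_0$. A minimal generator $A$ of $c$ with $|A|\ge2$ is a minimal D-generator of $c$ if $c\notin\varphi_0(A)$ and for every minimal generator $A'$ of $c$, $A'\subseteq\varphi_0(A)$ implies $A'=A$. The D-basis is $\Sigma_0\cup\{A\to c\mid c\in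 U,\ A\text{ a minimal D-generator of }c\}$. In both bases, implications with equal left-hand side may be merged into a single implication whose right-hand side is the union; all left-hand sides are nonempty. Algorithm LinClosureDirect on input $(Y,\Sigma)$: for each $A\to B\in\Sigma$ set $count[A\to B]:=|A|$, and for each $a\in U$ let $list[a]$ be the set of implications $A\to B\in\Sigma$ with $a\in A$. Set $update:=Y$ and $add:=\emptyset$. While $update\neq\emptyset$: choose $m\in update$, remove $m$ from $update$, and for each $A\to B\in list[m]$ decrement $count[A\to B]$ by one and, if it becomes $0$, set $add:=add\cup B$. Return $Y\cup add$. (Note $update$ is never enlarged.) *)

From mathcomp Require Import all_boot.
Set Implicit Arguments. Unset Strict Implicit. Unset Printing Implicit Defensive.

Section Defs.
Variable U : finType.

Definition impl := ({set U} * {set U})%type.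

Definition closure_op (phi : {set U} -> {set U}) : Prop :=
  [/\ forall X : {set U}, X \subset phi X,
      forall X Y : {set U}, X \subset Y -> phi X \subset phi Y &
      forall X : {set U}, phi (phi X) = phi X].

Definition standard (phi : {set U} -> {set U}) : Prop :=
  (forall a : U, phi (phi [set a] :\ a) = phi [set a] :\ a) /\
  (forall a b : U, a != b -> phi [set a] != phi [set b]).

Definition impl_closed (S : {set impl}) (Y : {set U}) : bool :=
  [forall f in S, (f.1 \subset Y) ==> (f.2 \subset Y)].

Definition impl_closure (S : {set impl}) (X : {set U}) : {set U} :=
  \bigcap_(Y : {set U} | (X \subset Y) && impl_closed S Y) Y.

Definition min_gen (phi : {set U} -> {set U}) (c : U) (A : {set U}) : bool :=
  [&& c \in phi A, c \notin A &
      [forall A' : {set U}, (A' \proper A) ==> (c \notin phi A')]].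

(* Canonical direct unit basis (unmerged). *)
Definition CDUB (phi : {set U} -> {set U}) : {set impl} :=
  [set f : impl | [exists c : U, (f.2 == [set c]) && min_gen phi c f.1]].

Definition Sigma0 (phi : {set U} -> {set U}) : {set impl} :=
  [set f : impl | [exists a : U, exists c : U,
     [&& f.1 == [set a], f.2 == [set c] & c \in phi [set a] :\ a]]].

Definition phi0 (phi : {set U} -> {set U}) (X : {set U}) : {set U} :=
  impl_closure (Sigma0 phi) X.

Definition min_Dgen (phi : {set U} -> {set U}) (c : U) (A : {set U}) : bool :=
  [&& min_gen phi c A, 2 <= #|A|, c \notin phi0 phi A &
      [forall A' : {set U}, (min_gen phi c A' && (A' \subset phi0 phi A)) ==> (A' == A)]].

(* D-basis (unmerged). *)
Definition Dbasis (phi : {set U} -> {set U}) : {set impl} :=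
  Sigma0 phi :|:
  [set f : impl | [exists c : U, (f.2 == [set c]) && min_Dgen phi c f.1]].

Definition merge_impl (S : {set impl}) : {set impl} :=
  [set (f.1, \bigcup_(g in S | g.1 == f.1) g.2) | f in S].

(* State: counters (indexed by implications) and the set "add". *)
Definition lcd_step (S : {set impl}) (st : {ffun impl -> nat} * {set U}) (m : U)
  : {ffun impl -> nat} * {set U} :=
  let: (cnt, add) := st in
  (* for each A -> B in list[m]: decrement count; if it becomes 0, add B.
     "becomes 0 after decrementing" is "was 1 before decrementing". *)
  ([ffun f => if (f \in S) && (m \in f.1) then (cnt f).-1 else cnt f],
   add :|: \bigcup_(f in S | (m \in f.1) && (cnt f == 1)) f.2).

(* Run on input (Y, S), with the elements of update = Y chosen in the
   order given by the sequence [order] (a duplicate-free enumeration of Y). *)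
Definition LCD (S : {set impl}) (Y : {set U}) (order : seq U) : {set U} :=
  let init := ([ffun f : impl => #|f.1|], (set0 : {set U})) in
  Y :|: (foldl (lcd_step S) init order).2.

End Defs.

From mathcomp Require Import all_boot.
Set Implicit Arguments. Unset Strict Implicit. Unset Printing Implicit Defensive.

(* LinClosureDirect keeps, for every implication, the number of premise
   elements not yet processed; hence after processing all of Y it has fired
   exactly the implications with nonempty premise inside Y, and returns Y
   together with their conclusions.  For the canonical direct unit basis this
   is phi X, since every c in phi X \ X has a minimal generator inside X.
   For the D-basis, a minimal generator A of c inside phi0 X whose phi0-closure
   is smallest is a minimal D-generator: a competitor B inside phi0 A has the
   same phi0-closure, and two minimal generators lying in each other's
   phi0-closure coincide, because the elements of a minimal generator are
   pairwise phi-incomparable and a standard closure operator separates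
   singletons. *)

Section LinClosureDirect.
Variable U : finType.
Implicit Types (S : {set impl U}) (A P Y : {set U}) (f : impl U).

(* Implications with empty premise are excluded: their counter starts at 0
   and is never decremented, so LinClosureDirect never fires them. *)
Definition fire S Y : {set U} :=
  \bigcup_(f in S | (f.1 != set0) && (f.1 \subset Y)) f.2.

Definition lcd_inv S P (st : {ffun impl U -> nat} * {set U}) :=
  (forall f, st.1 f = if f \in S then #|f.1 :\: P| else #|f.1|) /\ st.2 = fire S P.

Lemma cardsD_eq1 A P m : m \notin P -> m \in A ->
  (#|A :\: P| == 1) = (A \subset m |: P).
Proof.
move=> mP mA; have mAP : m \in A :\: P by rewrite inE mP.
have sub_m : [set m] \subset A :\: P by rewrite sub1set.
by rewrite setUC -subDset -(cards1 m) eq_sym (subset_leqif_cards sub_m).2 eqEsubset sub_m.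
Qed.

Lemma lcd_step_inv S P st m : m \notin P -> lcd_inv S P st ->
  lcd_inv S (m |: P) (lcd_step S st m).
Proof.
case: st => cnt add mP [cntE /= ->]; split => [f|] /=.
  rewrite ffunE cntE; case: (f \in S) => //=; case mf: (m \in f.1) => /=.
    by rewrite (cardsD1 m) !inE mf (negbTE mP) setDDl setUC.
  rewrite setUC -setDDl; suff -> : f.1 :\: P :\ m = f.1 :\: P by [].
  by apply/setDidPl; rewrite disjoint_sym disjoints1 !inE mf andbF.
apply/setP => x; rewrite inE; apply/idP/bigcupP.
  case/orP => /bigcupP [f].
    case/and3P=> fS f0 fP xf; exists f => //.
    by rewrite fS f0 (subset_trans fP (subsetUr _ _)).
  case/and3P=> fS mf; rewrite cntE fS (cardsD_eq1 mP mf) => fmP xf.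
  by exists f => //; rewrite fS fmP andbT; apply/set0Pn; exists m.
case=> f /and3P [fS f0 fmP] xf; case mf: (m \in f.1).
  apply/orP; right; apply/bigcupP; exists f => //.
  by rewrite fS mf cntE fS (cardsD_eq1 mP mf).
have f_m : f.1 :\: [set m] = f.1 by apply/setDidPl; rewrite disjoint_sym disjoints1 mf.
apply/orP; left; apply/bigcupP; exists f; rewrite // fS f0 /=.
by rewrite -f_m subDset.
Qed.

Lemma lcd_fold_inv S P st s : uniq s -> [disjoint s & P] -> lcd_inv S P st ->
  lcd_inv S ([set x in s] :|: P) (foldl (lcd_step S) st s).
Proof.
elim: s P st => [|m s IHs] P st /=.
  move=> _ _; suff -> : [set x in [::]] = set0 :> {set U} by rewrite set0U.
  by apply/setP => x; rewrite !inE.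
case/andP=> ms us; rewrite disjoint_cons => /andP [mP sP] inv.
have -> : [set x in m :: s] :|: P = [set x in s] :|: (m |: P).
  by apply/setP => y; rewrite !inE -orbA orbCA.
apply: IHs => //; last exact: lcd_step_inv.
rewrite disjoint_subset; apply/subsetP => y ys.
by rewrite !inE (disjointFr sP ys) orbF; apply: contraNneq ms => <-.
Qed.

Lemma LCDE S Y order : perm_eq order (enum Y) -> LCD S Y order = Y :|: fire S Y.
Proof.
move=> order_Y; have uniq_order : uniq order by rewrite (perm_uniq order_Y) enum_uniq.
have orderE : [set x in order] :|: set0 = Y.
  by apply/setP => y; rewrite !inE (perm_mem order_Y) mem_enum orbF.
have inv0 : lcd_inv S set0 ([ffun f : impl U => #|f.1|], set0).
  split=> [f|] /=; first by rewrite ffunE setD0; case: (f \in S).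
  apply/esym/setP => x; rewrite inE; apply/bigcupP => -[f /and3P [_ f0]].
  by rewrite subset0 (negbTE f0).
have disj0 : [disjoint order & (set0 : {set U})] by apply/pred0P => y; rewrite !inE andbF.
have [_] := lcd_fold_inv uniq_order disj0 inv0.
by rewrite orderE /LCD => ->.
Qed.

Lemma fire_merge_impl S Y : fire (merge_impl S) Y = fire S Y.
Proof.
apply/setP => x; apply/bigcupP/bigcupP.
  case=> _ /andP [/imsetP [f fS ->] /= fY] /bigcupP [g /andP [gS /eqP gf] xg].
  by exists g; rewrite // gS gf.
case=> f /andP [fS fY] xf; exists (f.1, \bigcup_(g in S | g.1 == f.1) g.2).
  by rewrite (imset_f (fun f : impl U => (f.1, _)) fS).
by apply/bigcupP; exists f; rewrite ?fS ?eqxx.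
Qed.

End LinClosureDirect.

Section ImplClosure.
Variable U : finType.
Implicit Types (S : {set impl U}) (X Y : {set U}).

Lemma impl_closure_sub S X : X \subset impl_closure S X.
Proof. by apply/bigcapsP => Y /andP []. Qed.

Lemma impl_closure_min S X Y :
  X \subset Y -> impl_closed S Y -> impl_closure S X \subset Y.
Proof. by move=> XY closedY; apply: bigcap_inf; rewrite XY. Qed.

Lemma impl_closure_closed S X : impl_closed S (impl_closure S X).
Proof.
apply/forallP => f; apply/implyP => fS; apply/implyP => f1.
apply/bigcapsP => Y /andP [XY closedY].
have f1Y : f.1 \subset Y := subset_trans f1 (impl_closure_min XY closedY).
by move/forallP/(_ f): closedY; rewrite fS f1Y.
Qed.

Lemma impl_closureS_closure S X Y :
  X \subset impl_closure S Y -> impl_closure S X \subset impl_closure S Y.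
Proof. by move=> XY; apply: impl_closure_min XY (impl_closure_closed S Y). Qed.

End ImplClosure.

Section ClosureOperator.
Variable U : finType.
Implicit Types (X Y : {set U}).
Variable phi : {set U} -> {set U}.

Lemma Sigma0_closedP Y :
  reflect {in Y, forall a, phi [set a] \subset Y} (impl_closed (Sigma0 phi) Y).
Proof.
apply: (iffP forallP) => [closedY a aY | phi1Y f].
  apply/subsetP => c ca; case: (eqVneq c a) => [-> // | ca'].
  have fS : ([set a], [set c]) \in Sigma0 phi.
    rewrite inE; apply/existsP; exists a; apply/existsP; exists c.
    by rewrite !eqxx !inE ca ca'.
  by move: (closedY ([set a], [set c])); rewrite fS !sub1set aY.
apply/implyP; rewrite inE => /existsP [a /existsP [c /and3P [/eqP -> /eqP -> ca]]].
apply/implyP; rewrite !sub1set /= => aY.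
by move: ca; rewrite inE => /andP [_]; apply/subsetP/phi1Y.
Qed.

Lemma phi1_sub_phi0 X a : a \in phi0 phi X -> phi [set a] \subset phi0 phi X.
Proof. exact/Sigma0_closedP/impl_closure_closed. Qed.

Hypothesis phi_closure : closure_op phi.

Lemma sub_phi X : X \subset phi X. Proof. by case: phi_closure. Qed.
Lemma phiS X Y : X \subset Y -> phi X \subset phi Y.
Proof. by case: phi_closure => _ + _; apply. Qed.
Lemma phi_id X : phi (phi X) = phi X. Proof. by case: phi_closure. Qed.

Lemma phi_sub_phi X Y : X \subset phi Y -> phi X \subset phi Y.
Proof. by move=> XY; rewrite -(phi_id Y) phiS. Qed.

Lemma mem_phi1_trans a b c : a \in phi [set b] -> b \in phi [set c] -> a \in phi [set c].
Proof. by move=> ab; rewrite -sub1set => /phi_sub_phi/subsetP; apply. Qed.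

Lemma phi0_sub_phi X : phi0 phi X \subset phi X.
Proof.
apply: impl_closure_min (sub_phi X) _; apply/Sigma0_closedP => a aX.
by apply: phi_sub_phi; rewrite sub1set.
Qed.

Lemma phi_phi0 X : phi (phi0 phi X) = phi X.
Proof.
apply/eqP; rewrite eqEsubset phi_sub_phi ?phi0_sub_phi //=.
exact/phiS/impl_closure_sub.
Qed.

Lemma phi0_sub_bigcup X : phi0 phi X \subset \bigcup_(a in X) phi [set a].
Proof.
apply: impl_closure_min.
  by apply/subsetP => a aX; apply/bigcupP; exists a; rewrite // (subsetP (sub_phi _)) ?set11.
apply/Sigma0_closedP => b /bigcupP [a aX ba]; apply/subsetP => c cb.
by apply/bigcupP; exists a; last exact: mem_phi1_trans cb ba.
Qed.

End ClosureOperator.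

Section MinimalGenerators.
Variable U : finType.
Implicit Types (Y A B : {set U}).
Variable phi : {set U} -> {set U}.

Lemma exists_min_gen Y c : c \in phi Y -> c \notin Y ->
  exists2 A, min_gen phi c A & A \subset Y.
Proof.
move=> cY cNY; have genY : (Y \subset Y) && (c \in phi Y) by rewrite subxx cY.
have [A /andP [AY cA] minA] :=
  @arg_minnP _ Y [pred A : {set U} | (A \subset Y) && (c \in phi A)] (fun A => #|A|) genY.
exists A => //; rewrite /min_gen cA (contra (subsetP AY c)) //=.
apply/forallP => B; apply/implyP => BA; apply/negP => cB.
have : #|A| <= #|B| by apply: minA; rewrite /= cB andbT (subset_trans (proper_sub BA) AY).
by rewrite leqNgt proper_card.
Qed.

Hypothesis phi_closure : closure_op phi.
Hypothesis phi_standard : standard phi.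

Lemma phi_set0 : phi set0 = set0.
Proof.
apply/setP => a; rewrite inE; apply/negbTE/negP => a_phi0.
have : phi set0 \subset phi [set a] :\ a.
  by case: phi_standard => <- _; apply: phiS => //; apply: sub0set.
by move/subsetP/(_ a a_phi0); rewrite !inE eqxx.
Qed.

Lemma min_gen_neq0 c A : min_gen phi c A -> A != set0.
Proof. by case/and3P=> cA _ _; apply: contraTneq cA => ->; rewrite phi_set0 inE. Qed.

(* Otherwise A :\ a would already generate c. *)
Lemma min_gen_phi1_eq c A a b : min_gen phi c A -> a \in A -> b \in A ->
  a \in phi [set b] -> a = b.
Proof.
case/and3P=> cA _ /forallP minA aA bA ab; apply/eqP/negPn/negP => a_neq_b.
have A_phi : A \subset phi (A :\ a).
  apply/subsetP => y yA; case: (eqVneq y a) => [-> | y_neq_a].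
    by apply: (subsetP (phiS phi_closure _)) ab; rewrite sub1set !inE eq_sym a_neq_b.
  by apply: (subsetP (sub_phi phi_closure _)); rewrite !inE y_neq_a.
move: (minA (A :\ a)); rewrite properD1 //= => /negP; apply.
exact: subsetP (phi_sub_phi phi_closure A_phi) c cA.
Qed.

Lemma min_gen_eq c A B : min_gen phi c A -> min_gen phi c B ->
  A \subset phi0 phi B -> B \subset phi0 phi A -> A = B.
Proof.
move=> genA genB AB BA.
have sAB : A \subset B.
  apply/subsetP => a aA.
  have /bigcupP [b bB ab] := subsetP (phi0_sub_bigcup phi_closure B) a (subsetP AB a aA).
  have /bigcupP [a' a'A ba'] := subsetP (phi0_sub_bigcup phi_closure A) b (subsetP BA b bB).
  have a'a := min_gen_phi1_eq genA aA a'A (mem_phi1_trans phi_closure ab ba'); subst a'.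
  case: (eqVneq a b) => [-> // | a_neq_b].
  have : phi [set a] == phi [set b] by rewrite eqEsubset !(phi_sub_phi phi_closure) ?sub1set.
  by case: phi_standard => _ /(_ a b a_neq_b)/negbTE ->.
apply/eqP; apply: contraT => A_neq_B.
case/and3P: genB => _ _ /forallP /(_ A); rewrite properEneq A_neq_B sAB /=.
by case/and3P: genA => ->.
Qed.

End MinimalGenerators.

Section Bases.
Variable U : finType.
Implicit Types (S : {set impl U}) (X Y A B : {set U}) (f : impl U).
Variable phi : {set U} -> {set U}.
Hypothesis phi_closure : closure_op phi.

Lemma fire_sub_phi S Y : {in S, forall f, f.2 \subset phi f.1} -> fire S Y \subset phi Y.
Proof.
move=> soundS; apply/bigcupsP => f /andP [fS /andP [_ fY]].
exact: subset_trans (soundS f fS) (phiS phi_closure fY).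
Qed.

Lemma CDUB_sound : {in CDUB phi, forall f, f.2 \subset phi f.1}.
Proof.
by move=> f; rewrite inE => /existsP [c /andP [/eqP -> /and3P [cf _ _]]]; rewrite sub1set.
Qed.

Lemma Dbasis_sound : {in Dbasis phi, forall f, f.2 \subset phi f.1}.
Proof.
move=> f; rewrite !inE => /orP [].
  by case/existsP=> a /existsP [c /and3P [/eqP -> /eqP ->]]; rewrite inE sub1set => /andP [].
by case/existsP=> c /andP [/eqP -> /and4P [/and3P [cf _ _] _ _ _]]; rewrite sub1set.
Qed.

Hypothesis phi_standard : standard phi.

Lemma CDUB_direct X : X :|: fire (CDUB phi) X = phi X.
Proof.
apply/eqP; rewrite eqEsubset subUset sub_phi // fire_sub_phi //=; last exact: CDUB_sound.
apply/subsetP => c cX; rewrite inE; case: (boolP (c \in X)) => //= cNX.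
have [A genA AX] := exists_min_gen cX cNX.
apply/bigcupP; exists (A, [set c]); rewrite ?set11 //=.
rewrite AX (min_gen_neq0 phi_closure phi_standard genA).
by rewrite !andbT inE; apply/existsP; exists c; rewrite eqxx.
Qed.

Lemma exists_min_Dgen X c : c \in phi X -> c \notin phi0 phi X ->
  exists2 A, min_Dgen phi c A & A \subset phi0 phi X.
Proof.
move=> cX cNX0; rewrite -(phi_phi0 phi_closure) in cX.
have [A0 genA0 A0X] := exists_min_gen cX cNX0.
have genA0' : min_gen phi c A0 && (A0 \subset phi0 phi X) by rewrite genA0.
have [A /andP [genA AX] minA] :=
  @arg_minnP _ A0 [pred A : {set U} | min_gen phi c A && (A \subset phi0 phi X)]
    (fun A => #|phi0 phi A|) genA0'.
have AX0 : phi0 phi A \subset phi0 phi X := impl_closureS_closure AX.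
have cNA0 : c \notin phi0 phi A by apply: contra cNX0; apply: subsetP.
exists A => //; rewrite /min_Dgen genA cNA0 /=; apply/andP; split.
  rewrite ltnNge; apply: contra cNA0 => A_le1.
  have /cards1P [a Aa] : #|A| == 1.
    by rewrite eqn_leq A_le1 card_gt0 (min_gen_neq0 phi_closure phi_standard genA).
  have aA0 : a \in phi0 phi A by rewrite (subsetP (impl_closure_sub _ A)) // Aa set11.
  by apply: (subsetP (phi1_sub_phi0 aA0)); case/and3P: genA; rewrite Aa.
apply/forallP => B; apply/implyP => /andP [genB BA0].
have B0A0 : phi0 phi B \subset phi0 phi A := impl_closureS_closure BA0.
have B0A0_eq : phi0 phi B = phi0 phi A.
  by apply/eqP; rewrite eqEcard B0A0 minA //= genB (subset_trans BA0 AX0).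
apply/eqP/esym/(min_gen_eq phi_closure phi_standard genA genB) => //.
by rewrite B0A0_eq impl_closure_sub.
Qed.

Lemma Dbasis_direct X : phi0 phi X :|: fire (Dbasis phi) (phi0 phi X) = phi X.
Proof.
have fire_sub : fire (Dbasis phi) (phi0 phi X) \subset phi X.
  by rewrite -(phi_phi0 phi_closure X) fire_sub_phi //; apply: Dbasis_sound.
apply/eqP; rewrite eqEsubset subUset phi0_sub_phi // fire_sub /=.
apply/subsetP => c cX; rewrite inE; case: (boolP (c \in phi0 phi X)) => //= cNX0.
have [A DgenA AX0] := exists_min_Dgen cX cNX0.
have genA : min_gen phi c A by case/and4P: DgenA.
apply/bigcupP; exists (A, [set c]); rewrite ?set11 //=.
rewrite AX0 (min_gen_neq0 phi_closure phi_standard genA).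
by rewrite !andbT !inE; apply/orP; right; apply/existsP; exists c; rewrite eqxx.
Qed.

End Bases.

Theorem proposition2 (U : finType) (phi : {set U} -> {set U}) (X : {set U}) :
  closure_op phi -> standard phi ->
  (forall Sigma : {set impl U},
     ((Sigma = CDUB phi) \/ (Sigma = merge_impl (CDUB phi))) ->
     forall order : seq U, perm_eq order (enum X) ->
       LCD Sigma X order = phi X) /\
  (forall Sigma : {set impl U},
     ((Sigma = Dbasis phi) \/ (Sigma = merge_impl (Dbasis phi))) ->
     forall order : seq U, perm_eq order (enum (phi0 phi X)) ->
       LCD Sigma (phi0 phi X) order = phi X).
Proof.
move=> phi_closure phi_standard.
split=> Sigma Sigma_def order order_perm; rewrite LCDE //.
  by case: Sigma_def => ->; rewrite ?fire_merge_impl (CDUB_direct phi_closure phi_standard).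
by case: Sigma_def => ->; rewrite ?fire_merge_impl (Dbasis_direct phi_closure phi_standard).
Qed.
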